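(* Let $\Omega,\widetilde\Omega$ be Polish spaces and $\mathcal{P}:\Omega\twoheadrightarrow\mathfrak{P}(\widetilde\Omega)$ a non-empty-valued random set whose graph $\{(\omega,P):P\in\mathcal{P}(\omega)\}$ is analytic. Let $X:\Omega\times\widetilde\Omega\to\mathbb{R}^d$ be Borel-measurable with $\mathrm{supp}_{\mathcal{P}}X(\omega)\neq\emptyset$ for all $\omega\in\Omega$. Fix $\omega\in\Omega$ and let $h:\Omega\times\mathbb{R}^d\to\mathbb{R}$ be upper semi-analytic and such that $h(\omega,\cdot)$ is lower semi-continuous. Then $$\mathrm{ess\,sup}_{\mathcal{P}}\,h(X)(\omega)=\sup_{x\in\mathrm{supp}_{\mathcal{P}}X(\omega)}h(\omega,x),$$ where $h(X)(\omega,\widetilde\omega):=h(\omega,X(\omega,\widetilde\omega))$.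
   Context: $\mathfrak{P}(\widetilde\Omega)$ is the set of Borel probability measures on $\widetilde\Omega$ with the weak topology. A property holds $\mathcal{P}(\omega)$-q.s. if it holds outside a set contained in a Borel set that is null for every $P\in\mathcal{P}(\omega)$. $\mathrm{supp}_{\mathcal{P}}X(\omega):=\bigcap\{F\subset\mathbb{R}^d\text{ closed}:\ P(X(\omega,\cdot)\in F)=1\ \forall P\in\mathcal{P}(\omega)\}$. A function is upper semi-analytic if its strict upper level sets $\{h>c\}$ are analytic. For $Z:\Omega\times\widetilde\Omega\to\mathbb{R}$, $\mathrm{ess\,sup}_{\mathcal{P}}Z(\omega)\in[-\infty,+\infty]$ denotes the quasi-sure essential supremum: the value such that, for all $y\in\mathbb{R}$, $y\ge Z(\omega,\cdot)$ $\mathcal{P}(\omega)$-q.s. if and only if $y\ge \mathrm{ess\,sup}_{\mathcal{P}}Z(\omega)$ (and $\mathrm{ess\,sup}_{\mathcal{P}}Z(\omega)\ge Z(\omega,\cdot)$ $\mathcal{P}(\omega)$-q.s.). *)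

From HB Require Import structures.
From mathcomp Require Import all_boot all_order all_algebra.
From mathcomp Require Import all_classical all_reals all_analysis.
Set Implicit Arguments. Unset Strict Implicit. Unset Printing Implicit Defensive.
Import Order.TTheory GRing.Theory Num.Theory.
Import numFieldNormedType.Exports.
Local Open Scope classical_set_scope.
Local Open Scope ring_scope.

Definition borel_set (T : topologicalType) (A : set T) : Prop :=
  <<s @open T >> A.

Notation borelType T := (g_sigma_algebraType (@open T)).

Definition polish (R : realType) (T : topologicalType) : Prop :=
  (exists D : set T, countable D /\ closure D = setT) /\
  (exists dist : T -> T -> R,
     (forall x y, 0 <= dist x y) /\
     (forall x y, dist x y = 0 <-> x = y) /\
     (forall x y, dist x y = dist y x) /\
     (forall x y z, dist x z <= dist x y + dist y z) /\
     (forall A : set T, open A <->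
        (forall x, A x -> exists2 e : R, 0 < e & [set y | dist x y < e] `<=` A)) /\
     (forall u : nat -> T,
        (forall e : R, 0 < e -> exists N : nat, forall m n, (N <= m)%N -> (N <= n)%N ->
           dist (u m) (u n) < e) ->
        exists l : T, (fun n => dist (u n) l) @ \oo --> 0)).

(** Convergence in the Baire space N^N (product of discrete topologies). *)
Definition baire_cvg (s : nat -> nat -> nat) (t : nat -> nat) : Prop :=
  forall k, \forall n \near \oo, s n k = t k.

(** Analytic subset of a (Polish) topological space: empty, or the image of
    the Baire space N^N under a continuous map (continuity = sequential
    continuity, since N^N is metrizable). *)
Definition analytic (T : topologicalType) (A : set T) : Prop :=
  A = set0 \/
  exists f : (nat -> nat) -> T,
    (forall s t, baire_cvg s t -> f (s n) @[n --> \oo] --> f t) /\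
    range f = A.

Definition upper_semi_analytic (R : realType) (T : topologicalType)
  (h : T -> R) : Prop :=
  forall c : R, analytic [set x | c < h x].

Definition lsc_fun (R : realType) (T : topologicalType)
  (f : T -> R) : Prop :=
  forall c : R, open [set x | c < f x].

Definition weak_cvg (R : realType) (T : ptopologicalType)
  (Pn : nat -> probability (borelType T) R) (P : probability (borelType T) R) : Prop :=
  forall g : T -> R, continuous g -> (exists C : R, forall x, `|g x| <= C) ->
    (\int[Pn n]_x (g x)%:E)%E @[n --> \oo] --> (\int[P]_x (g x)%:E)%E.

(** The graph of P : Om ->> 𝔓(Ot) is analytic in Om × 𝔓(Ot), where 𝔓(Ot)
    carries the weak topology: it is empty or the continuous image of N^N. *)
Definition analytic_graph (R : realType) (Om : topologicalType) (Ot : ptopologicalType)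
  (Pset : Om -> set (probability (borelType Ot) R)) : Prop :=
  [set wp | Pset wp.1 wp.2] = set0 \/
  exists f : (nat -> nat) -> Om * probability (borelType Ot) R,
    (forall s t, baire_cvg s t ->
        (f (s n)).1 @[n --> \oo] --> (f t).1 /\
        weak_cvg (fun n => (f (s n)).2) (f t).2) /\
    range f = [set wp | Pset wp.1 wp.2].

Definition quasi_sure (R : realType) (T : ptopologicalType)
  (Pw : set (probability (borelType T) R)) (Q : T -> Prop) : Prop :=
  exists N : set (borelType T), measurable N /\
    (forall P, Pw P -> P N = 0%E) /\ (forall w, ~ N w -> Q w).

Definition qs_support (R : realType) (T : ptopologicalType) (d : nat)
  (Pw : set (probability (borelType T) R)) (Xw : T -> 'rV[R]_d) : set 'rV[R]_d :=
  [set x | forall F : set 'rV[R]_d, closed F ->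
     (forall P, Pw P -> P (Xw @^-1` F) = 1%E) -> F x].

Definition qs_ess_sup (R : realType) (T : ptopologicalType)
  (Pw : set (probability (borelType T) R)) (Zw : T -> R) : \bar R :=
  ereal_inf [set y : \bar R | quasi_sure Pw (fun w => ((Zw w)%:E <= y)%E)].

(* Idea: rational balls form a countable base of R^d, so the union of the
   preimages under X(w, .) of those balls that are null for every P in P(w)
   is a single quasi-surely null set, off which X(w, .) takes values in its
   quasi-sure support; this gives ess sup <= sup.  Conversely, by lower
   semicontinuity every sublevel set {h(w, .) <= y} is closed, and if h(X)
   <= y quasi-surely it has full measure under every P in P(w), hence contains
   the support.  For fixed w only the measurability of X(w, .) is used. *)

From HB Require Import structures.
From mathcomp Require Import all_boot all_order all_algebra.
From mathcomp Require Import all_classical all_reals all_analysis.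
From mathcomp Require Import lra.
Set Implicit Arguments. Unset Strict Implicit. Unset Printing Implicit Defensive.
Import Order.TTheory GRing.Theory Num.Theory.
Import numFieldNormedType.Exports.
Local Open Scope classical_set_scope.
Local Open Scope ring_scope.

Lemma borel_set_section (Om Ot : topologicalType) (w : Om) (A : set (Om * Ot)) :
  borel_set A -> borel_set [set t | A (w, t)].
Proof.
pose S := [set B : set (Om * Ot) | borel_set [set t | B (w, t)]].
suff : <<s @open (Om * Ot)%type >> `<=` S by apply.
apply: smallest_sub.
  split=> [|B SB|F SF].
  - exact: sigma_algebra0.
  - exact: sigma_algebraCD SB.
  - exact: sigma_algebra_bigcup SF.
move=> B oB; apply: sub_sigma_algebra.
have /continuousP : continuous (fun t : Ot => (w, t)).
  by move=> t; apply: cvg_pair => //; exact: cvg_cst.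
exact.
Qed.

Lemma borel_set_closed (T : topologicalType) (F : set T) :
  closed F -> borel_set F.
Proof.
move=> cF; rewrite -[F]setCK -setTD.
by apply: sigma_algebraCD; apply: sub_sigma_algebra; exact: closed_openC.
Qed.

Lemma countable_bigcup_measurable d (T : measurableType d) (I : countType)
    (D : set I) (F : I -> set T) :
  (forall i, D i -> measurable (F i)) -> measurable (\bigcup_(i in D) F i).
Proof.
move=> mF; rewrite bigcup_mkcond.
apply: countable_bigcupT_measurable => [|i]; first exact: countableP.
by case: ifPn => // /set_mem; exact: mF.
Qed.

Lemma measure0_countable_bigcup d (T : measurableType d) (R : realType)
    (mu : {measure set T -> \bar R}) (I : countType) (D : set I)
    (F : I -> set T) :
  (forall i, D i -> measurable (F i)) -> (forall i, D i -> mu (F i) = 0%E) ->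
  mu (\bigcup_(i in D) F i) = 0%E.
Proof.
move=> mF F0.
pose G n := if unpickle n is Some i then if pselect (D i) then F i else set0
            else set0.
have mG n : measurable (G n).
  by rewrite /G; case: unpickle => [i|] //; case: pselect => //= Di; exact: mF.
have -> : \bigcup_(i in D) F i = \bigcup_n G n.
  apply/seteqP; split => [t [i Di Fit]|t [n _]].
    by exists (pickle i) => //; rewrite /G pickleK; case: pselect.
  by rewrite /G; case: unpickle => [i|] //; case: pselect => // Di; exists i.
apply/eqP; rewrite eq_le measure_ge0 andbT.
have := measure_sigma_subadditive mu mG (bigcupT_measurable _ mG) (fun _ x => x).
move/le_trans; apply.
rewrite eseries0 // => n _ _; rewrite /G.
case: unpickle => [i|] /=; last exact: measure0.
by case: pselect => /= [/F0|_]; last exact: measure0.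
Qed.

Definition rat_ball (R : realType) (m n : nat) (q : 'M[rat]_(m, n) * rat) :
  set 'M[R]_(m, n) := ball (map_mx (@ratr R) q.1) (ratr q.2).

Lemma rat_ball_sub (R : realType) (m n : nat) (x : 'M[R]_(m, n)) (e : R) :
  0 < e -> exists q, rat_ball q x /\ rat_ball q `<=` ball x e.
Proof.
move=> e0.
have [r] := rat_in_itvoo (divr_gt0 e0 (ltr0n _ 2)).
rewrite in_itv /= => /andP [r0 re].
have /choice [f xf] : forall ij : 'I_m * 'I_n, exists q : rat,
    ball (ratr q : R) (ratr r) (x ij.1 ij.2).
  move=> [i j]; have : x i j - ratr r < x i j + ratr r.
    by rewrite ltrBlDr -addrA ltrDl addr_gt0.
  move=> /rat_in_itvoo[q]; rewrite in_itv /= => qi.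
  by exists q; rewrite /ball /= distrC ltr_distlC.
pose q := (\matrix_(i, j) f (i, j), r).
have qx : rat_ball q x by split => // i j; rewrite !mxE; exact: (xf (i, j)).
exists q; split=> // y qy; apply: (@le_ball _ _ _ (ratr r + ratr r)).
  by move: re; move: (ratr r : R) => rr; lra.
exact: ball_triangle (ball_sym qx) qy.
Qed.

Lemma lsc_closed_le (R : realType) (T : topologicalType) (f : T -> R)
    (y : \bar R) :
  lsc_fun f -> closed [set x | ((f x)%:E <= y)%E].
Proof.
case: y => [r| |] lf.
- have -> : [set x | ((f x)%:E <= r%:E)%E] = ~` [set x | r < f x].
    by apply/seteqP; split => x /=; rewrite lee_fin leNgt => /negP.
  exact: open_closedC.
- have -> : [set x | ((f x)%:E <= +oo)%E] = setT.
    by apply/seteqP; split => x // _; exact: leey.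
  exact: closedT.
- have -> : [set x | ((f x)%:E <= -oo)%E] = set0.
    by apply/seteqP; split => x //=; rewrite leeNy_eq.
  exact: closed0.
Qed.

Section quasi_sure_support.
Variables (R : realType) (T : ptopologicalType) (d : nat).
Variables (Pw : set (probability (borelType T) R)) (Xw : T -> 'rV[R]_d).
Hypothesis mXw :
  forall B, borel_set B -> measurable (Xw @^-1` B : set (borelType T)).

Lemma quasi_sure_prob1 (A : set (borelType T)) P :
  measurable A -> quasi_sure Pw A -> Pw P -> P A = 1%E.
Proof.
move=> mA [N [mN [N0 NA]]] PP; apply/eqP; rewrite eq_le probability_le1 //=.
rewrite -(sube0 1) -(N0 P PP) -probability_setC //.
by apply: le_measure; rewrite ?inE //; exact: measurableC.
Qed.

Lemma qs_support_sub_closed F :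
  closed F -> quasi_sure Pw (Xw @^-1` F) -> qs_support Pw Xw `<=` F.
Proof.
move=> cF qsF x; apply => // P; apply: quasi_sure_prob1 => //.
by apply: mXw; exact: borel_set_closed.
Qed.

Lemma quasi_sure_qs_support : quasi_sure Pw (Xw @^-1` qs_support Pw Xw).
Proof.
have mXq q : measurable (Xw @^-1` rat_ball q : set (borelType T)).
  by apply: mXw; apply: sub_sigma_algebra; exact: ball_open.
pose null q := forall P, Pw P -> P (Xw @^-1` rat_ball q) = 0%E.
exists (\bigcup_(q in null) Xw @^-1` rat_ball q); split.
  exact: countable_bigcup_measurable.
split=> [P PP|t Nt F cF FP].
  by apply: measure0_countable_bigcup => // q /(_ P PP).
apply: contrapT => Ft.
have /nbhs_ballP[e /= e0 eF] : nbhs (Xw t) (~` F).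
  by apply: open_nbhs_nbhs; split => //; exact: closed_openC.
have [q [qt qF]] := rat_ball_sub (Xw t) e0.
apply: Nt; exists q => // P PP; apply/eqP; rewrite eq_le measure_ge0 andbT.
have <- : P (~` (Xw @^-1` F)) = 0%E.
  rewrite probability_setC ?FP ?subee //.
  by apply: mXw; exact: borel_set_closed.
apply: le_measure; rewrite ?inE //; last by move=> s /qF /eF.
by apply: measurableC; apply: mXw; exact: borel_set_closed.
Qed.

End quasi_sure_support.

Theorem proposition1 (R : realType) (Om : topologicalType) (Ot : ptopologicalType)
  (d : nat)
  (Pset : Om -> set (probability (borelType Ot) R))
  (X : Om -> Ot -> 'rV[R]_d)
  (h : Om * 'rV[R]_d -> R) (w : Om) :
  polish R Om -> polish R Ot ->
  (forall w', Pset w' !=set0) ->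
  analytic_graph Pset ->
  (forall B : set 'rV[R]_d, borel_set B ->
     borel_set [set p : Om * Ot | B (X p.1 p.2)]) ->
  (forall w', qs_support (Pset w') (X w') !=set0) ->
  upper_semi_analytic h ->
  lsc_fun (fun x => h (w, x)) ->
  qs_ess_sup (Pset w) (fun wt => h (w, X w wt)) =
  ereal_sup ((fun x => EFin (h (w, x))) @` qs_support (Pset w) (X w)).
Proof.
move=> _ _ _ _ mX _ _ hlsc.
have mXw B : borel_set B -> measurable (X w @^-1` B : set (borelType Ot)).
  by move=> /mX; exact: borel_set_section.
apply/eqP; rewrite eq_le; apply/andP; split.
- apply: ereal_inf_lbound.
  have [N [mN [N0 NS]]] := quasi_sure_qs_support (Pset w) mXw.
  exists N; split; [|split] => // t /NS St.
  by apply: ereal_sup_ubound; exists (X w t).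
- apply: ge_ereal_sup => _ [x Sx <-]; apply: le_ereal_inf_tmp => y /= qsy.
  exact: (qs_support_sub_closed mXw (lsc_closed_le hlsc) qsy Sx).
Qed.
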